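(* For all $m,n\in\mathbb{Z}$ with $\gcd(m,n)=1$ and $mn(m+n)\neq0$ we have $A(m,n)\ge 29$, and $A(m,n)=29$ holds only when $c=-\frac{A(m,n)}{B(m,n)}=-\frac{29}{16}$. Equivalently, among rational $c$ for which $f_c(x)=x^2+c$ has a rational $3$-cycle, the smallest possible absolute value of the numerator of $c$ is $29$, attained only by $c=-\tfrac{29}{16}$.
   Context: $A(m,n)=m^6+2m^5n+4m^4n^2+8m^3n^3+9m^2n^4+4mn^5+n^6$, $B(m,n)=4m^2n^2(m+n)^2$. Standing fact: $f_c(x)=x^2+c$ ($c\in\mathbb{Q}$) has a rational $3$-cycle if and only if $c=-A(m,n)/B(m,n)$ for some coprime integers $m,n$ with $mn(m+n)\neq0$, and this fraction is then in lowest terms. *)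

From mathcomp Require Import all_boot all_order all_algebra.
Import GRing.Theory Num.Theory.
Local Open Scope ring_scope.

Definition Apoly (m n : int) : int :=
  m ^+ 6 + 2 * m ^+ 5 * n + 4 * m ^+ 4 * n ^+ 2 + 8 * m ^+ 3 * n ^+ 3
  + 9 * m ^+ 2 * n ^+ 4 + 4 * m * n ^+ 5 + n ^+ 6.

Definition Bpoly (m n : int) : int := 4 * m ^+ 2 * n ^+ 2 * (m + n) ^+ 2.

Definition cpar (m n : int) : rat := - ((Apoly m n)%:~R / (Bpoly m n)%:~R).

From mathcomp Require Import all_boot all_order all_algebra.
From mathcomp Require Import ring lra zify.
Import GRing.Theory Num.Theory.
Local Open Scope ring_scope.

(* Write Q(m,n) = m^2 + mn + n^2 for the norm form of the
   Eisenstein integers.  A sum-of-squares identity in the monomials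
   m^3, m^2 n, m n^2, n^3 shows Q(m,n)^3 <= 2 A(m,n) for all integers m, n.
   Hence A(m,n) <= 29 forces Q(m,n)^3 <= 58, i.e. Q(m,n) <= 3, and since
   4 Q(m,n) = (2m+n)^2 + 3n^2 (and Q is symmetric) this confines m and n to
   [-2, 2].  A finite inspection of these 25 pairs shows that the only ones
   with m n (m+n) <> 0 and A(m,n) <= 29 are the six images of (1,1) under
   the symmetries of the 3-cycle parametrization, all of which have
   A = 29 and B = 16.  The theorem follows: A(m,n) >= 29, and equality
   forces c = -29/16. *)

Definition normQ (m n : int) : int := m ^+ 2 + m * n + n ^+ 2.

Lemma normQ_cube_le_Apoly (m n : int) : normQ m n ^+ 3 <= 2 * Apoly m n.
Proof.
set u := m ^+ 3; set v := m ^+ 2 * n; set w := m * n ^+ 2; set t := n ^+ 3.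
have sos : 1520 * (2 * Apoly m n - normQ m n ^+ 3) =
  380 * (2 * u + v - 3 * w - t) ^+ 2 + 20 * (19 * v + 23 * w + 5 * t) ^+ 2
  + 12 * (10 * w + 3 * t) ^+ 2 + 532 * t ^+ 2.
  by rewrite /u /v /w /t /Apoly /normQ; ring.
have := sqr_ge0 (2 * u + v - 3 * w - t); have := sqr_ge0 (19 * v + 23 * w + 5 * t).
have := sqr_ge0 (10 * w + 3 * t); have := sqr_ge0 t.
lra.
Qed.

Lemma normQ_le3 (m n : int) : Apoly m n <= 29 -> normQ m n <= 3.
Proof.
move=> hA; have hQ := normQ_cube_le_Apoly m n.
have [//|Q_gt3] := lerP (normQ m n) 3.
have : 4 ^+ 3 <= normQ m n ^+ 3 by rewrite lerXn2r ?nnegrE //; lia.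
lra.
Qed.

Lemma normQ_le3_coord (m n : int) : normQ m n <= 3 -> -2 <= n <= 2.
Proof.
rewrite /normQ => hQ.
have square : 4 * (m ^+ 2 + m * n + n ^+ 2) = (2 * m + n) ^+ 2 + 3 * n ^+ 2 by ring.
have : n ^+ 2 <= 4 by have := sqr_ge0 (2 * m + n); lra.
rewrite expr2 => hn; apply/andP; split; nia.
Qed.

Lemma normQC (m n : int) : normQ m n = normQ n m.
Proof. by rewrite /normQ; ring. Qed.

Lemma int_in_range (k : int) : -2 <= k <= 2 ->
  k = -2 \/ k = -1 \/ k = 0 \/ k = 1 \/ k = 2.
Proof. by move=> /andP[]; lia. Qed.

(* Finite inspection of the box [-2,2]^2: the non-degenerate pairs with
   A <= 29 are exactly +-(1,1), +-(1,-2), +-(2,-1), all with A = 29, B = 16. *)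
Lemma small_box_values (m n : int) :
  -2 <= m <= 2 -> -2 <= n <= 2 -> m * n * (m + n) != 0 -> Apoly m n <= 29 ->
  Apoly m n = 29 /\ Bpoly m n = 16.
Proof.
move=> /int_in_range hm /int_in_range hn.
by case: hm => [|[|[|[|]]]] ->; case: hn => [|[|[|[|]]]] ->; vm_compute.
Qed.

Theorem theorem4 (m n : int) :
  gcdz m n = 1 -> m * n * (m + n) != 0 ->
  29 <= Apoly m n /\
  (Apoly m n = 29 -> cpar m n = - (29%:Q / 16%:Q)).
Proof.
move=> _ nondeg.
have [hA | hA] := lerP (Apoly m n) 29; last first.
  by split=> [|hA29]; [lra | rewrite hA29 in hA].
have hQ := normQ_le3 m n hA.
have hn := normQ_le3_coord m n hQ.
have hm : -2 <= m <= 2 by apply: (normQ_le3_coord n m); rewrite normQC.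
have [hA29 hB] := small_box_values m n hm hn nondeg hA.
by rewrite hA29; split=> // _; rewrite /cpar hA29 hB.
Qed.
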